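(* Let $E$ be an arbitrary directed graph satisfying Condition (L), and let $(H,S)$ be a reflexive admissible pair of $E$. Then the quotient graph $E/(H,S)$ satisfies Condition (L).
   Context: A path is a vertex or a finite sequence of edges $e_1\dots e_n$ with $\mathbf{r}(e_i)=\mathbf{s}(e_{i+1})$; $p^0$ is its vertex set. A cycle is a closed path ($\mathbf{s}(p)=\mathbf{r}(p)$) of positive length whose edges have distinct sources; it has an exit if some vertex of it emits an edge not on the cycle. Condition (L): every cycle has an exit. Write $u\ge v$ if there is a path from $u$ to $v$; $R(V)=\{u\mid u\ge v$ for some $v\in V\}$. $H\subseteq E^0$ is hereditary if closed under following paths, saturated if every vertex emitting a nonzero finite number of edges all with ranges in $H$ lies in $H$. $B_H=\{v\in E^0-H\mid v$ emits infinitely many edges and $\mathbf{s}^{-1}(v)\cap\mathbf{r}^{-1}(E^0-H)$ is nonempty and finite$\}$. Admissible pair: $(H,S)$, $H$ hereditary saturated, $S\subseteq B_H$. $H^\bot=E^0-R(H)$, $S^\bot=B_{H^\bot}-S$, $H^{\bot\bot}=E^0-R(H^\bot)$, $S^{\bot\bot}=B_{H^{\bot\bot}}-S^\bot$; $(H,S)$ is reflexive if $(H,S)=(H^{\bot\bot},S^{\bot\bot})$. The quotient graph $E/(H,S)$ has vertices $(E^0-H)\cup\{v'\mid v\in B_H-S\}$ and edges $\{e\in E^1\mid\mathbf{r}(e)\notin H\}\cup\{e'\mid e\in E^1,\ \mathbf{r}(e)\in B_H-S\}$, with $\mathbf{s},\mathbf{r}$ as in $E$ on edges of $E$, and $\mathbf{s}(e')=\mathbf{s}(e)$,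 $\mathbf{r}(e')=\mathbf{r}(e)'$. *)

From Stdlib Require Import List.
Import ListNotations.
Set Implicit Arguments.

Record Graph := MkGraph {
  vtx : Type;
  edg : Type;
  src : edg -> vtx;
  rng : edg -> vtx }.

Section GraphDefs.
Variable E : Graph.

Fixpoint walk (u : vtx E) (p : list (edg E)) (v : vtx E) : Prop :=
  match p with
  | [] => u = v
  | e :: p' => src E e = u /\ walk (rng E e) p' v
  end.

Definition reaches (u v : vtx E) : Prop := exists p, walk u p v.

Definition is_cycle (c : list (edg E)) : Prop :=
  exists e p, c = e :: p /\ walk (src E e) c (src E e) /\ NoDup (map (src E) c).

Definition has_exit (c : list (edg E)) : Prop :=
  exists f, In (src E f) (map (src E) c) /\ ~ In f c.

Definition condition_L : Prop := forall c, is_cycle c -> has_exit c.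

Definition finite_set (P : edg E -> Prop) : Prop :=
  exists l : list (edg E), forall e, P e -> In e l.

Definition hereditary (H : vtx E -> Prop) : Prop :=
  forall u v, H u -> reaches u v -> H v.

Definition saturated (H : vtx E -> Prop) : Prop :=
  forall v, (exists e, src E e = v) -> finite_set (fun e => src E e = v) ->
    (forall e, src E e = v -> H (rng E e)) -> H v.

Definition breaking (H : vtx E -> Prop) (v : vtx E) : Prop :=
  ~ H v /\ ~ finite_set (fun e => src E e = v) /\
  (exists e, src E e = v /\ ~ H (rng E e)) /\
  finite_set (fun e => src E e = v /\ ~ H (rng E e)).

Definition admissible (H S : vtx E -> Prop) : Prop :=
  hereditary H /\ saturated H /\ (forall v, S v -> breaking H v).

Definition Rset (X : vtx E -> Prop) (u : vtx E) : Prop :=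
  exists v, X v /\ reaches u v.

Definition Hperp (H : vtx E -> Prop) (u : vtx E) : Prop := ~ Rset H u.

Definition Sperp (H S : vtx E -> Prop) (v : vtx E) : Prop :=
  breaking (Hperp H) v /\ ~ S v.

Definition reflexive_pair (H S : vtx E -> Prop) : Prop :=
  (forall v, H v <-> Hperp (Hperp H) v) /\
  (forall v, S v <-> Sperp (Hperp H) (Sperp H S) v).

(* Quotient graph E/(H,S): vertices inl v (v not in H) and inr v = v'
   (v in B_H - S); edges inl e (r(e) not in H) and inr e = e'
   (r(e) in B_H - S). *)
Definition qvert_pred (H S : vtx E -> Prop) (x : vtx E + vtx E) : Prop :=
  match x with
  | inl v => ~ H v
  | inr v => breaking H v /\ ~ S v
  end.

Definition qedge_pred (H S : vtx E -> Prop) (x : edg E + edg E) : Prop :=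
  match x with
  | inl e => ~ H (rng E e)
  | inr e => breaking H (rng E e) /\ ~ S (rng E e)
  end.

Lemma hered_src (H : vtx E -> Prop) (hH : hereditary H) (e : edg E) :
  ~ H (rng E e) -> ~ H (src E e).
Proof.
  intros nr hs; apply nr; apply (hH (src E e)); auto.
  exists [e]; simpl; auto.
Qed.

Definition QV (H S : vtx E -> Prop) : Type := { x | qvert_pred H S x }.
Definition QE (H S : vtx E -> Prop) : Type := { x | qedge_pred H S x }.

Definition q_src (H S : vtx E -> Prop) (hH : hereditary H) (y : QE H S) : QV H S :=
  match y with
  | exist _ x p =>
    match x as x0 return qedge_pred H S x0 -> QV H S with
    | inl e => fun p => exist (qvert_pred H S) (inl (src E e)) (@hered_src H hH e p)
    | inr e => fun p => exist (qvert_pred H S) (inl (src E e))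
                          (@hered_src H hH e (proj1 (proj1 p)))
    end p
  end.

Definition q_rng (H S : vtx E -> Prop) (y : QE H S) : QV H S :=
  match y with
  | exist _ x p =>
    match x as x0 return qedge_pred H S x0 -> QV H S with
    | inl e => fun p => exist (qvert_pred H S) (inl (rng E e)) p
    | inr e => fun p => exist (qvert_pred H S) (inr (rng E e)) p
    end p
  end.

End GraphDefs.

(* The quotient graph is defined for H hereditary (needed so that sources
   of edges of E/(H,S) lie outside H). *)
Definition quotient_graph (E : Graph) (H S : vtx E -> Prop) (hH : @hereditary E H)
  : Graph :=
  @MkGraph (@QV E H S) (@QE E H S) (@q_src E H S hH) (@q_rng E H S).

(* Erasing primes is a graph morphism E/(H,S) -> E that is injective on sources of edges
   (these are never primed), so a cycle of E/(H,S) is carried to a cycle of E through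
   vertices outside H; by Condition (L) it has an exit f in E, and it suffices to find one
   with r(f) outside H, since such an f is an edge of the quotient.  If every exit ran into
   H, everything reachable from the cycle would lie in H or on the cycle.  But a vertex v of
   the cycle is outside H = H^perp-perp, so v reaches some w in H^perp, and w reaches H
   either directly or through an exit of the cycle. *)

From Stdlib Require Import List Classical ProofIrrelevance.
Import ListNotations.

Lemma NoDup_map_refine {A B C : Type} (f : A -> B) (g : A -> C) {l : list A} :
  (forall x y, g x = g y -> f x = f y) -> NoDup (map f l) -> NoDup (map g l).
Proof.
  intros hfg; induction l as [|a l IH]; simpl; intros hnd; constructor.
  - inversion hnd as [|? ? hnotin]; subst.
    intro hin; apply hnotin.
    apply in_map_iff in hin; destruct hin as [z [hz hzl]].
    apply in_map_iff; exists z; auto.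
  - inversion hnd; auto.
Qed.

Section Walks.
Context {E : Graph}.

Lemma walk_app {u v w : vtx E} {p q} :
  walk E u p v -> walk E v q w -> walk E u (p ++ q) w.
Proof.
  revert u; induction p as [|e p IH]; simpl; intros u hp hq.
  - subst; auto.
  - destruct hp; split; auto.
Qed.

Lemma reaches_refl (u : vtx E) : reaches E u u.
Proof. exists []; reflexivity. Qed.

Lemma reaches_edge (e : edg E) : reaches E (src E e) (rng E e).
Proof. exists [e]; simpl; auto. Qed.

Lemma reaches_trans {u v w : vtx E} : reaches E u v -> reaches E v w -> reaches E u w.
Proof. intros [p hp] [q hq]; exists (p ++ q); eapply walk_app; eauto. Qed.

Lemma walk_reaches_src {u v x : vtx E} {p} :
  walk E u p v -> In x (map (src E) p) -> reaches E u x /\ reaches E x v.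
Proof.
  revert u; induction p as [|e p IH]; simpl; intros u hw hx; [destruct hx|].
  destruct hw as [hs hw]; destruct hx as [hx|hx].
  - subst; split; [apply reaches_refl | exists (e :: p); simpl; auto].
  - destruct (IH _ hw hx) as [hux hxv]; split; auto.
    subst; exact (reaches_trans (reaches_edge e) hux).
Qed.

Lemma walk_rng_in {u v : vtx E} {p g} :
  walk E u p v -> In g p -> In (rng E g) (map (src E) p) \/ rng E g = v.
Proof.
  revert u; induction p as [|e p IH]; simpl; intros u hw hg; [destruct hg|].
  destruct hw as [hs hw]; destruct hg as [hg|hg].
  - subst; destruct p as [|e' p]; simpl in hw; [right; auto|].
    left; right; left; apply hw.
  - destruct (IH _ hw hg); auto.
Qed.

Lemma closed_walk_rng_in {u : vtx E} {p g} :
  walk E u p u -> In g p -> In (rng E g) (map (src E) p).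
Proof.
  intros hw hg; destruct (walk_rng_in hw hg) as [hin | ->]; auto.
  destruct p as [|e p]; [destruct hg|].
  left; apply hw.
Qed.

Lemma walk_invariant (P : vtx E -> Prop) {u v : vtx E} {p} :
  (forall e, P (src E e) -> P (rng E e)) -> walk E u p v -> P u -> P v.
Proof.
  intros hstep; revert u; induction p as [|e p IH]; simpl; intros u hw hu.
  - subst; auto.
  - destruct hw as [<- hw]; eauto.
Qed.

End Walks.

Lemma walk_map (E F : Graph) (fv : vtx E -> vtx F) (fe : edg E -> edg F) :
  (forall e, src F (fe e) = fv (src E e)) -> (forall e, rng F (fe e) = fv (rng E e)) ->
  forall {u p v}, walk E u p v -> walk F (fv u) (map fe p) (fv v).
Proof.
  intros hsrc hrng u p; revert u; induction p as [|e p IH]; simpl; intros u v hw.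
  - subst; reflexivity.
  - destruct hw as [<- hw]; rewrite hsrc, hrng; auto.
Qed.

Section ExitsOfCycles.
Context {E : Graph} {H : vtx E -> Prop}.
Hypothesis hH : hereditary E H.

Lemma reaches_from_cycle {c u x y} :
  walk E u c u ->
  (forall f, In (src E f) (map (src E) c) -> ~ In f c -> H (rng E f)) ->
  In x (map (src E) c) -> reaches E x y -> H y \/ In y (map (src E) c).
Proof.
  intros hc hexits hx [q hq].
  refine (walk_invariant (fun z => H z \/ In z (map (src E) c)) _ hq (or_intror hx)).
  intros g [hg|hg].
  - left; exact (hH _ _ hg (reaches_edge g)).
  - destruct (classic (In g c)) as [hgc|hgc].
    + right; exact (closed_walk_rng_in hc hgc).
    + left; auto.
Qed.

Hypothesis hL : condition_L E.
Hypothesis hHpp : forall v, Hperp E (Hperp E H) v -> H v.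

Lemma cycle_has_exit_outside {c v} :
  is_cycle E c -> In v (map (src E) c) -> ~ H v ->
  exists f, In (src E f) (map (src E) c) /\ ~ In f c /\ ~ H (rng E f).
Proof.
  intros hc hv hvH.
  apply NNPP; intro hno.
  assert (hexits : forall f, In (src E f) (map (src E) c) -> ~ In f c -> H (rng E f)).
  { intros f hf1 hf2; apply NNPP; intro; apply hno; eauto. }
  destruct (hL c hc) as [f [hf1 hf2]].
  destruct hc as [e [p [_ [hcw _]]]].
  assert (hv_perp : Rset E (Hperp E H) v).
  { apply NNPP; intro; apply hvH, hHpp; auto. }
  destruct hv_perp as [w [hw_perp hvw]].
  apply hw_perp.
  destruct (reaches_from_cycle hcw hexits hv hvw) as [hwH|hwc].
  - exists w; split; [exact hwH | apply reaches_refl].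
  - exists (rng E f); split; [auto|].
    apply (reaches_trans (proj2 (walk_reaches_src hcw hwc))).
    apply (reaches_trans (proj1 (walk_reaches_src hcw hf1))).
    apply reaches_edge.
Qed.

End ExitsOfCycles.

Section QuotientGraph.
Context {E : Graph} {H S : vtx E -> Prop}.
Variable hH : hereditary E H.

Let Q := @quotient_graph E H S hH.

Definition qe (y : QE E H S) : edg E :=
  match proj1_sig y with inl e | inr e => e end.

Definition qv (x : QV E H S) : vtx E :=
  match proj1_sig x with inl v | inr v => v end.

Lemma src_qe y : src E (qe y) = qv (q_src hH y).
Proof. destruct y as [[e|e] p]; reflexivity. Qed.

Lemma rng_qe y : rng E (qe y) = qv (q_rng y).
Proof. destruct y as [[e|e] p]; reflexivity. Qed.

Lemma q_src_eq x y : src E (qe x) = src E (qe y) -> q_src hH x = q_src hH y.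
Proof.
  destruct x as [[e|e] px], y as [[e'|e'] py]; simpl; intros he;
    apply subset_eq_compat; cbn in he; rewrite he; reflexivity.
Qed.

Lemma src_qe_notin_H y : ~ H (src E (qe y)).
Proof.
  destruct y as [[e|e] p]; apply hered_src; [exact hH | exact p | exact hH | apply p].
Qed.

Lemma is_cycle_qe {c} : is_cycle Q c -> is_cycle E (map qe c).
Proof.
  intros [y [p [-> [hw hnd]]]].
  exists (qe y), (map qe p); split; [reflexivity|split].
  - rewrite src_qe; exact (walk_map Q E qv qe src_qe rng_qe hw).
  - rewrite map_map.
    exact (NoDup_map_refine (src Q) (fun x => src E (qe x)) q_src_eq hnd).
Qed.

Lemma has_exit_of_qe {c f} :
  In (src E f) (map (src E) (map qe c)) -> ~ In f (map qe c) -> ~ H (rng E f) ->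
  has_exit Q c.
Proof.
  intros hf1 hf2 hf3.
  exists (exist (qedge_pred E H S) (inl f) hf3); split.
  - rewrite map_map in hf1; apply in_map_iff in hf1 as [y [hy hyc]].
    apply in_map_iff; exists y; split; [apply q_src_eq; exact hy | exact hyc].
  - intro hin; apply hf2, in_map_iff.
    exists (exist _ (inl f) hf3); split; [reflexivity | exact hin].
Qed.

End QuotientGraph.

Theorem proposition3p11 (E : Graph) (H S : vtx E -> Prop)
  (hL : condition_L E) (hadm : admissible E H S) (hrefl : reflexive_pair E H S) :
  condition_L (@quotient_graph E H S (proj1 hadm)).
Proof.
  set (hH := proj1 hadm).
  intros c hc.
  pose proof (is_cycle_qe hH hc) as hcE.
  destruct hc as [y [p [hcp _]]].
  assert (hy : In (src E (qe y)) (map (src E) (map qe c))) by (rewrite hcp; left; reflexivity).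
  destruct (cycle_has_exit_outside hH hL (fun v => proj2 (proj1 hrefl v)) hcE hy
              (src_qe_notin_H hH y)) as [f [hf1 [hf2 hf3]]].
  exact (has_exit_of_qe hH hf1 hf2 hf3).
Qed.
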